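(* Assume the linear payoff assumption. Let $X=\begin{bmatrix}A(\nu^* )\\ B(\mu^* )\end{bmatrix}\in\mathbb{R}^{(m+n-2)\times d}$ and $y=\begin{bmatrix}c(\mu^* )\\ d(\nu^* )\end{bmatrix}$. Assume $X$ has full row rank and its smallest singular value satisfies $\sigma_{m+n-2}(X)\ge\sigma_b>0$. Let $\theta^*_{\min}=X^\dagger y$ be the minimum-norm solution of $X\theta=y$, where ${}^\dagger$ is the Moore–Penrose pseudoinverse. Let $(a^k,b^k)$, $k\le N$, be i.i.d. with $a^k\sim\mu^*$ and $b^k\sim\nu^*$ independent, and let $\widehat\mu,\widehat\nu$ be the empirical frequencies. Set $$\widehat\theta=\begin{bmatrix}A(\widehat\nu)\\ B(\widehat\mu)\end{bmatrix}^\dagger\begin{bmatrix}c(\widehat\mu)\\ d(\widehat\nu)\end{bmatrix}.$$ Then for every $\delta\in(0,1)$ there are $N_0$ and $C$ (depending on $\phi,\eta,\sigma_b,\mu^*,\nu^*,\delta$ but not on $N$) such that for $N\ge N_0$, with probability at least $1-\delta$, $$\|\widehat\theta-\theta^*_{\min}\|\le C\,\frac{m^2+n^2}{\sqrt N}.$$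
   Context: Let $m,n\ge 2$, $\mathcal A=\{1,\dots,m\}$, $\mathcal B=\{1,\dots,n\}$, and $\eta>0$. For a payoff matrix $Q\in\mathbb{R}^{m\times n}$, the entropy-regularized zero-sum matrix game is $$\max_{\mu\in\Delta(\mathcal A)}\min_{\nu\in\Delta(\mathcal B)}\ \mu^\top Q\nu+\eta^{-1}\mathcal H(\mu)-\eta^{-1}\mathcal H(\nu),\qquad \mathcal H(\pi)=-\sum_i\pi_i\log\pi_i .$$ Its unique saddle point, the quantal response equilibrium (QRE) $(\mu,\nu)$, is characterized by $$\mu(a)=\frac{\exp\big(\eta\sum_b Q(a,b)\nu(b)\big)}{\sum_{a'}\exp\big(\eta\sum_bQ(a',b)\nu(b)\big)},\qquad \nu(b)=\frac{\exp\big(-\eta\sum_a Q(a,b)\mu(a)\big)}{\sum_{b'}\exp\big(-\eta\sum_aQ(a,b')\mu(a)\big)}.$$ Linear payoff assumption: there are a feature map $\phi:\mathcal A\times\mathcal B\to\mathbb{R}^d$ and $\theta^*\in\mathbb{R}^d$ with $\|\theta^*\|^2\le M$ such that $Q(a,b)=\langle\phi(a,b),\theta^*\rangle$ for all $(a,b)$. $(\mu^*,\nu^* )$ denotes the QRE of this $Q$; all its entries are positive. For $\mu\in\Delta(\mathcal A)$ and $\nu\in\Delta(\mathcal B)$ with positive entries, define: - $A(\nu)\in\mathbb{R}^{(m-1)\times d}$, whose row indexed by $a=2,\dots,m$ is $\sum_{b}\nu(b)\,(\phi(a,b)-\phi(1,b))^\top$; - $B(\mu)\in\mathbb{R}^{(n-1)\times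 d}$, whose row indexed by $b=2,\dots,n$ is $\sum_a\mu(a)\,(\phi(a,b)-\phi(a,1))^\top$; - $c(\mu)=\big(\eta^{-1}\log(\mu(a)/\mu(1))\big)_{a=2}^m\in\mathbb{R}^{m-1}$; - $d(\nu)=\big(-\eta^{-1}\log(\nu(b)/\nu(1))\big)_{b=2}^n\in\mathbb{R}^{n-1}$. *)

From HB Require Import structures.
From mathcomp Require Import all_boot all_order all_algebra.
From mathcomp Require Import boolp classical_sets reals.
From mathcomp Require Import sequences exp.
Set Implicit Arguments. Unset Strict Implicit. Unset Printing Implicit Defensive.
Import Order.TTheory GRing.Theory Num.Theory.
Local Open Scope ring_scope.

Section Defs.
Variable R : realType.

Definition vnorm (p q : nat) (A : 'M[R]_(p, q)) : R :=
  Num.sqrt (\sum_(i < p) \sum_(j < q) A i j ^+ 2).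

Definition is_dist (T : finType) (p : T -> R) : Prop :=
  (forall t, 0 <= p t) /\ \sum_t p t = 1.

(* Index conventions: action "1" is ord0 and actions 2..k correspond to
   i : 'I_k.-1 via i |-> i.+1. *)
Lemma ord_zero_lt (k : nat) (i : 'I_k.-1) : (0 < k)%N.
Proof. by case: k i => [|k] [i hi]. Qed.
Lemma ord_succ_lt (k : nat) (i : 'I_k.-1) : (i.+1 < k)%N.
Proof. by case: k i => [|k] [i hi]. Qed.
Definition first_of (k : nat) (i : 'I_k.-1) : 'I_k := Ordinal (ord_zero_lt i).
Definition succ_of (k : nat) (i : 'I_k.-1) : 'I_k := Ordinal (ord_succ_lt i).

Variables (m n d : nat).

Definition Qlin (phi : 'I_m -> 'I_n -> 'rV[R]_d) (theta : 'cV[R]_d)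
  (a : 'I_m) (b : 'I_n) : R := (phi a b *m theta) 0 0.

Definition is_QRE (eta : R) (Q : 'I_m -> 'I_n -> R)
  (mu : 'I_m -> R) (nu : 'I_n -> R) : Prop :=
  [/\ is_dist mu, is_dist nu,
      (forall a, mu a = expR (eta * \sum_b Q a b * nu b) /
                        \sum_a' expR (eta * \sum_b Q a' b * nu b)) &
      (forall b, nu b = expR (- eta * \sum_a Q a b * mu a) /
                        \sum_b' expR (- eta * \sum_a Q a b' * mu a))].

Variable phi : 'I_m -> 'I_n -> 'rV[R]_d.

Definition Amat (nu : 'I_n -> R) : 'M[R]_(m.-1, d) :=
  \matrix_(i, j) (\sum_b nu b *: (phi (succ_of i) b - phi (first_of i) b)) 0 j.
Definition Bmat (mu : 'I_m -> R) : 'M[R]_(n.-1, d) :=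
  \matrix_(i, j) (\sum_a mu a *: (phi a (succ_of i) - phi a (first_of i))) 0 j.
Definition cvec (eta : R) (mu : 'I_m -> R) : 'cV[R]_(m.-1) :=
  \col_i (eta^-1 * ln (mu (succ_of i) / mu (first_of i))).
Definition dvec (eta : R) (nu : 'I_n -> R) : 'cV[R]_(n.-1) :=
  \col_i (- eta^-1 * ln (nu (succ_of i) / nu (first_of i))).

Definition Xmat (mu : 'I_m -> R) (nu : 'I_n -> R) : 'M[R]_(m.-1 + n.-1, d) :=
  col_mx (Amat nu) (Bmat mu).
Definition yvec (eta : R) (mu : 'I_m -> R) (nu : 'I_n -> R)
  : 'cV[R]_(m.-1 + n.-1) := col_mx (cvec eta mu) (dvec eta nu).

End Defs.

(* Moore-Penrose pseudoinverse: the (unique, always existing) matrix P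
   satisfying the four Penrose equations. *)
Definition penrose (R : realType) (p q : nat) (X : 'M[R]_(p, q)) (P : 'M[R]_(q, p))
  : Prop :=
  [/\ X *m P *m X = X, P *m X *m P = P,
      (X *m P)^T = X *m P & (P *m X)^T = P *m X].

Definition pinv (R : realType) (p q : nat) (X : 'M[R]_(p, q)) : 'M[R]_(q, p) :=
  match pselect (exists P, penrose X P) with
  | left h => proj1_sig (cid h)
  | right _ => 0
  end.

(* Smallest singular value of a p x q matrix with p <= q (the p-th singular
   value), via its variational characterization min_{|u|=1} |u^T X|. *)
Definition sigma_min (R : realType) (p q : nat) (X : 'M[R]_(p, q)) : R :=
  inf [set vnorm (u *m X) | u in [set u : 'rV[R]_p | vnorm u = 1]].

Section Sampling.
Variables (R : realType) (m n : nat).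

(* N i.i.d. samples (a^k, b^k) with a^k ~ mu, b^k ~ nu independent:
   a sample is s : {ffun 'I_N -> 'I_m * 'I_n}; its probability is the
   product measure. *)
Definition sample_weight (mu : 'I_m -> R) (nu : 'I_n -> R) (N : nat)
  (s : {ffun 'I_N -> 'I_m * 'I_n}) : R :=
  \prod_(k < N) (mu (s k).1 * nu (s k).2).

Definition prob_samples (mu : 'I_m -> R) (nu : 'I_n -> R) (N : nat)
  (E : {ffun 'I_N -> 'I_m * 'I_n} -> Prop) : R :=
  \sum_(s | `[< E s >]) sample_weight mu nu s.

Definition emp_mu (N : nat) (s : {ffun 'I_N -> 'I_m * 'I_n}) (a : 'I_m) : R :=
  #|[set k | (s k).1 == a]|%:R / N%:R.
Definition emp_nu (N : nat) (s : {ffun 'I_N -> 'I_m * 'I_n}) (b : 'I_n) : R :=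
  #|[set k | (s k).2 == b]|%:R / N%:R.
End Sampling.

Definition theta_min (R : realType) (m n d : nat) (eta : R)
  (phi : 'I_m -> 'I_n -> 'rV[R]_d) (mu : 'I_m -> R) (nu : 'I_n -> R) : 'cV[R]_d :=
  pinv (Xmat phi mu nu) *m yvec eta mu nu.

Definition theta_hat (R : realType) (m n d : nat) (eta : R)
  (phi : 'I_m -> 'I_n -> 'rV[R]_d) (N : nat) (s : {ffun 'I_N -> 'I_m * 'I_n})
  : 'cV[R]_d :=
  pinv (Xmat phi (emp_mu R s) (emp_nu R s)) *m yvec eta (emp_mu R s) (emp_nu R s).

(* The minimum-norm solution theta_min mu nu = X(mu, nu)^+ y(mu, nu) is locally Lipschitz in
   the distributions at (mu_star, nu_star).  Indeed X and y are Lipschitz in (mu, nu), y because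
   ln is Lipschitz away from 0; and a perturbation of X(mu_star, nu_star) of Frobenius size at
   most sigma_b / 2 keeps the lower bound sigma_b / 2 on |u X| / |u|, on which (X, y) |-> X^+ y
   is Lipschitz.  On the probabilistic side, the samples being independent, the expected squared
   deviation of the empirical frequencies is at most (m + n) / N, so by Markov's inequality it
   is at most (m + n) / (delta N) with probability at least 1 - delta.  For N large this is
   inside the Lipschitz radius, and the error is at most L sqrt ((m + n) / delta) / sqrt N. *)

From HB Require Import structures.
From mathcomp Require Import all_boot all_order all_algebra.
From mathcomp Require Import boolp classical_sets reals.
From mathcomp Require Import sequences exp.
From mathcomp Require Import lra ring.
Import Order.TTheory GRing.Theory Num.Theory.
Local Open Scope ring_scope.
Set Implicit Arguments. Unset Strict Implicit.

Section FrobeniusNorm.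
Variable R : realType.
Implicit Types (p q r : nat).

Lemma sum_mul_sqr_le (I : finType) (a b : I -> R) :
  (\sum_i a i * b i) ^+ 2 <= (\sum_i a i ^+ 2) * (\sum_i b i ^+ 2).
Proof.
(* Lagrange's identity: the gap is half of sum_{i,j} (a_i b_j - a_j b_i)^2. *)
have gap_ge0 : 0 <= \sum_i \sum_j (a i * b j - a j * b i) ^+ 2.
  by apply: sumr_ge0 => i _; apply: sumr_ge0 => j _; exact: sqr_ge0.
have lagrange : \sum_i \sum_j (a i * b j - a j * b i) ^+ 2 =
    \sum_i \sum_j (a i ^+ 2 * b j ^+ 2) + \sum_i \sum_j (a j ^+ 2 * b i ^+ 2)
    - 2 * (\sum_i \sum_j ((a i * b i) * (a j * b j))).
  rewrite mulr_sumr -!big_split -sumrN -big_split /=; apply: eq_bigr => i _.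
  rewrite mulr_sumr -!big_split -sumrN -big_split /=; apply: eq_bigr => j _.
  ring.
have prod_sums (F G : I -> R) : \sum_i \sum_j F i * G j = (\sum_i F i) * (\sum_i G i).
  by rewrite mulr_suml; apply: eq_bigr => i _; rewrite mulr_sumr.
rewrite lagrange (exchange_big _ _ _ _ _ (fun i j => a j ^+ 2 * b i ^+ 2)) /=
  !prod_sums -expr2 in gap_ge0.
lra.
Qed.

Lemma vnorm_ge0 p q (A : 'M[R]_(p, q)) : 0 <= vnorm A.
Proof. exact: sqrtr_ge0. Qed.

Lemma vnorm_sqr p q (A : 'M[R]_(p, q)) :
  vnorm A ^+ 2 = \sum_i \sum_j A i j ^+ 2.
Proof.
by rewrite sqr_sqrtr //; apply: sumr_ge0 => i _; apply: sumr_ge0 => j _; exact: sqr_ge0.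
Qed.

Lemma vnorm_eq0 p q (A : 'M[R]_(p, q)) : vnorm A = 0 -> A = 0.
Proof.
move=> A0; have sq0 : \sum_i \sum_j A i j ^+ 2 = 0 by rewrite -vnorm_sqr A0 expr0n.
apply/matrixP => i j; rewrite mxE.
have rowi0 : \sum_j A i j ^+ 2 = 0.
  by apply: (psumr_eq0P _ sq0) => // k _; apply: sumr_ge0 => l _; exact: sqr_ge0.
have /(_ j isT)/eqP := psumr_eq0P (fun k (_ : true) => sqr_ge0 (A i k)) rowi0.
by rewrite sqrf_eq0 => /eqP.
Qed.

Lemma le_sqr_ge0 (x y : R) : 0 <= y -> x ^+ 2 <= y ^+ 2 -> x <= y.
Proof. by move=> y0 xy; nra. Qed.

Lemma vnormD p q (A B : 'M[R]_(p, q)) : vnorm (A + B) <= vnorm A + vnorm B.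
Proof.
apply: le_sqr_ge0; first by rewrite addr_ge0 // vnorm_ge0.
have dot_le : \sum_i \sum_j A i j * B i j <= vnorm A * vnorm B.
  apply: le_sqr_ge0; first by rewrite mulr_ge0 // vnorm_ge0.
  rewrite exprMn !vnorm_sqr !pair_bigA /=.
  exact: (sum_mul_sqr_le (fun x : 'I_p * 'I_q => A x.1 x.2) (fun x => B x.1 x.2)).
have -> : vnorm (A + B) ^+ 2 =
    vnorm A ^+ 2 + vnorm B ^+ 2 + 2 * \sum_i \sum_j A i j * B i j.
  rewrite !vnorm_sqr mulr_sumr -!big_split; apply: eq_bigr => i _ /=.
  rewrite mulr_sumr -!big_split; apply: eq_bigr => j _ /=; rewrite mxE; ring.
nra.
Qed.

Lemma vnormZ p q (c : R) (A : 'M[R]_(p, q)) : vnorm (c *: A) = `|c| * vnorm A.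
Proof.
rewrite -sqrtr_sqr -sqrtrM ?sqr_ge0 // mulr_sumr; congr Num.sqrt.
by apply: eq_bigr => i _; rewrite mulr_sumr; apply: eq_bigr => j _; rewrite mxE exprMn.
Qed.

Lemma vnorm0 p q : vnorm (0 : 'M[R]_(p, q)) = 0.
Proof. by rewrite -(scale0r (0 : 'M[R]_(p, q))) vnormZ normr0 mul0r. Qed.

Lemma vnormN p q (A : 'M[R]_(p, q)) : vnorm (- A) = vnorm A.
Proof. by rewrite -scaleN1r vnormZ normrN normr1 mul1r. Qed.

Lemma vnormB p q (A B : 'M[R]_(p, q)) : vnorm (A - B) <= vnorm A + vnorm B.
Proof. by rewrite -(vnormN B) vnormD. Qed.

Lemma vnorm_tr p q (A : 'M[R]_(p, q)) : vnorm A^T = vnorm A.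
Proof.
rewrite /vnorm exchange_big /=; congr Num.sqrt.
by apply: eq_bigr => i _; apply: eq_bigr => j _; rewrite mxE.
Qed.

Lemma vnorm_mulmx p q r (A : 'M[R]_(p, q)) (B : 'M[R]_(q, r)) :
  vnorm (A *m B) <= vnorm A * vnorm B.
Proof.
apply: le_sqr_ge0; first by rewrite mulr_ge0 // vnorm_ge0.
rewrite exprMn !vnorm_sqr mulr_suml.
apply: ler_sum => i _; rewrite exchange_big mulr_sumr /=.
by apply: ler_sum => k _; rewrite mxE sum_mul_sqr_le.
Qed.

Lemma vnorm11 (A : 'M[R]_1) : vnorm A = `|A 0 0|.
Proof. by rewrite /vnorm !big_ord1 sqrtr_sqr. Qed.

Lemma vnorm_le_entry p q (A : 'M[R]_(p, q)) (c : R) : 0 <= c ->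
  (forall i j, `|A i j| <= c) -> vnorm A <= Num.sqrt (p * q)%:R * c.
Proof.
move=> c0 Ac; rewrite -(ger0_norm c0) -sqrtr_sqr -sqrtrM ?ler0n // ler_sqrt;
  last by rewrite mulr_ge0 ?ler0n ?sqr_ge0.
have -> : (p * q)%:R * c ^+ 2 = \sum_(i < p) \sum_(j < q) c ^+ 2.
  under [RHS]eq_bigr => i _ do rewrite sumr_const card_ord.
  by rewrite sumr_const card_ord natrM -mulrA !mulr_natl.
apply: ler_sum => i _; apply: ler_sum => j _.
by rewrite -real_normK ?num_real // lerXn2r ?nnegrE ?normr_ge0 ?Ac.

Qed.

Lemma col_mx_entry_le p1 p2 q (A : 'M[R]_(p1, q)) (B : 'M[R]_(p2, q)) (c : R) :
  (forall i j, `|A i j| <= c) -> (forall i j, `|B i j| <= c) ->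
  forall i j, `|col_mx A B i j| <= c.
Proof.
by move=> hA hB i j; rewrite -[i](splitK i); case: (split i) => k /=;
  rewrite ?col_mxEu ?col_mxEd.
Qed.

End FrobeniusNorm.

Section FiniteBounds.
Variables (R : realType) (I : finType).

Lemma exists_pos_lbound (f : I -> R) :
  (forall i, 0 < f i) -> exists2 c, 0 < c & forall i, c <= f i.
Proof.
move=> f_gt0; have S_ge0 : 0 <= \sum_i (f i)^-1.
  by apply: sumr_ge0 => i _; rewrite invr_ge0 ltW.
exists (1 + \sum_i (f i)^-1)^-1 => [|i]; first by rewrite invr_gt0 ltr_pwDl.
rewrite -[leRHS]invrK lef_pV2 ?posrE ?invr_gt0 ?ltr_pwDl //.
by rewrite (bigD1 i) //= addrCA lerDl addr_ge0 // sumr_ge0 // => j _; rewrite invr_ge0 ltW.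
Qed.

Lemma exists_norm_ubound (f : I -> R) : exists2 K, 0 <= K & forall i, `|f i| <= K.
Proof.
exists (\sum_i `|f i|) => [|i]; first exact: sumr_ge0.
by rewrite (bigD1 i) //= lerDl sumr_ge0.
Qed.

End FiniteBounds.

Lemma sqr_le_sqrt (R : realType) (x S : R) : x ^+ 2 <= S -> `|x| <= Num.sqrt S.
Proof. by move=> xS; rewrite -sqrtr_sqr ler_sqrt // (le_trans (sqr_ge0 x)). Qed.

Lemma eventually_div_natr_le (R : realType) (a b : R) : 0 < b ->
  exists N0 : nat, forall N, (N0 <= N)%N -> (0 < N)%N /\ a / N%:R <= b.
Proof.
move=> b_gt0; exists (Num.truncn (a / b)).+1 => N N0N; have N_gt0 := leq_trans (ltn0Sn _) N0N.
split => //; rewrite ler_pdivrMr ?ltr0n // -ler_pdivrMl // ltW //.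
by rewrite mulrC; apply: lt_le_trans (truncnS_gt _) _; rewrite ler_nat.
Qed.

Lemma lbound_close (R : realType) (I : finType) (p p' : I -> R) (c eps : R) :
  (forall i, c <= p i) -> eps <= c / 2 -> (forall i, `|p' i - p i| <= eps) ->
  forall i, c / 2 <= p' i.
Proof.
by move=> cp eps_le close i; have := close i; rewrite ler_norml => /andP[+ _]; have := cp i; lra.
Qed.

Section PseudoInverse.
Variables (R : realType) (p q : nat) (X : 'M[R]_(p, q)) (s : R).
Hypothesis s_gt0 : 0 < s.
Hypothesis X_lbound : forall u : 'rV[R]_p, s * vnorm u <= vnorm (u *m X).

Lemma lbound_mulmx_eq0 r (K : 'M[R]_(r, p)) : K *m X = 0 -> K = 0.
Proof.
move=> KX0; apply/row_matrixP => i; rewrite row0.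
apply: vnorm_eq0; apply/eqP; rewrite eq_le vnorm_ge0 andbT.
by have := X_lbound (row i K); rewrite -row_mul KX0 row0 vnorm0 pmulr_rle0.
Qed.

Lemma mulmx_tr_eq0 r (K : 'M[R]_(r, q)) : K *m K^T = 0 -> K = 0.
Proof.
move=> KK0; have diag i : \sum_j K i j ^+ 2 = (K *m K^T) i i.
  by rewrite mxE; apply: eq_bigr => j _; rewrite mxE expr2.
apply: vnorm_eq0; rewrite /vnorm (eq_bigr _ (fun i _ => diag i)) KK0.
by rewrite big1 ?sqrtr0 // => i _; rewrite mxE.
Qed.

Lemma unitmx_mul_tr : X *m X^T \in unitmx.
Proof.
rewrite -row_free_unit -kermx_eq0; apply/eqP.
apply: lbound_mulmx_eq0; apply: mulmx_tr_eq0.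
by rewrite trmx_mul mulmxA -(mulmxA _ X) mulmx_ker mul0mx.
Qed.

Lemma pinv_penrose : penrose X (pinv X).
Proof.
rewrite /pinv; case: pselect => [h|[]]; first by case: (cid h).
have XP : X *m (X^T *m invmx (X *m X^T)) = 1%:M by rewrite mulmxA mulmxV ?unitmx_mul_tr.
exists (X^T *m invmx (X *m X^T)); split.
- by rewrite XP mul1mx.
- by rewrite -(mulmxA _ X) XP mulmx1.
- by rewrite XP trmx1.
- by rewrite !trmx_mul trmxK trmx_inv trmx_mul trmxK mulmxA.
Qed.

Lemma mulmx_pinv : X *m pinv X = 1%:M.
Proof.
case: pinv_penrose => XPX _ _ _; apply/eqP; rewrite -subr_eq0; apply/eqP.
by apply: lbound_mulmx_eq0; rewrite mulmxBl XPX mul1mx subrr.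
Qed.

Lemma pinvE : pinv X = X^T *m ((pinv X)^T *m pinv X).
Proof. by case: pinv_penrose => _ PXP _ PXsym; rewrite mulmxA -trmx_mul PXsym PXP. Qed.

Lemma pinv_mulmx_tr : pinv X *m X *m X^T = X^T.
Proof. by case: pinv_penrose => XPX _ _ PXsym; rewrite -{1}PXsym -trmx_mul mulmxA XPX. Qed.

Lemma vnorm_pinv_mul (v : 'cV[R]_p) : vnorm (pinv X *m v) <= vnorm v / s.
Proof.
(* w = X^T z lies in the row space, so |w|^2 = z^T X w = z^T v <= |z||v| and s |z| <= |w|. *)
set w := pinv X *m v; set z := (pinv X)^T *m pinv X *m v.
have wE : w = X^T *m z by rewrite /w /z [in LHS]pinvE -mulmxA.
have w2 : vnorm w ^+ 2 <= vnorm z * vnorm v.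
  have -> : vnorm w ^+ 2 = (z^T *m v) 0 0.
    have -> : (z^T *m v) 0 0 = (w^T *m w) 0 0.
      by rewrite {1}wE [(X^T *m z)^T]trmx_mul trmxK -mulmxA /w (mulmxA X) mulmx_pinv mul1mx.
    by rewrite vnorm_sqr mxE; apply: eq_bigr => i _; rewrite big_ord1 expr2 [w^T _ _]mxE.
  by apply: le_trans (ler_norm _) _; rewrite -vnorm11 -(vnorm_tr z) vnorm_mulmx.
have sz : s * vnorm z <= vnorm w.
  by rewrite wE -(vnorm_tr (X^T *m z)) trmx_mul trmxK -(vnorm_tr z) X_lbound.
have := vnorm_ge0 z; have := vnorm_ge0 w; have := vnorm_ge0 v.
rewrite ler_pdivlMr // => v0 w0 z0.
have : s * vnorm w ^+ 2 <= s * (vnorm z * vnorm v) by rewrite ler_wpM2l // ltW.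
have : s * vnorm z * vnorm v <= vnorm w * vnorm v by rewrite ler_wpM2r.
move=> h1 h2; have : vnorm w * (vnorm w * s) <= vnorm w * vnorm v by nra.
have [->|wn0] := eqVneq (vnorm w) 0; first by rewrite !mul0r => _.
by rewrite ler_pM2l // lt_neqAle eq_sym wn0.
Qed.

End PseudoInverse.

Section Perturbation.
Variables (R : realType) (p q : nat).
Implicit Types (X : 'M[R]_(p, q)) (s : R).

Lemma sigma_min_lbound X s : s <= sigma_min X ->
  forall u : 'rV[R]_p, s * vnorm u <= vnorm (u *m X).
Proof.
move=> s_le u; have [->|un0] := eqVneq (vnorm u) 0; first by rewrite mulr0 vnorm_ge0.
have u_gt0 : 0 < vnorm u by rewrite lt_neqAle eq_sym un0 vnorm_ge0.
have unit_u : vnorm ((vnorm u)^-1 *: u) = 1.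
  by rewrite vnormZ ger0_norm ?invr_ge0 ?vnorm_ge0 // mulVf.
have : sigma_min X <= vnorm (((vnorm u)^-1 *: u) *m X).
  apply: ge_inf; last by exists ((vnorm u)^-1 *: u).
  by exists 0 => x [v _ <-]; exact: vnorm_ge0.
rewrite -scalemxAl vnormZ ger0_norm ?invr_ge0 ?vnorm_ge0 // => le_inf.
by have := le_trans s_le le_inf; rewrite ler_pdivlMl // mulrC.
Qed.

Lemma lbound_perturb X Xh s :
  (forall u : 'rV[R]_p, s * vnorm u <= vnorm (u *m X)) -> vnorm (Xh - X) <= s / 2 ->
  forall u : 'rV[R]_p, s / 2 * vnorm u <= vnorm (u *m Xh).
Proof.
move=> X_lbound close u.
have uX : u *m X = u *m Xh - u *m (Xh - X) by rewrite mulmxBr opprB addrC subrK.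
have := X_lbound u; rewrite uX => /le_trans/(_ (vnormB _ _)) le1.
have : vnorm u * vnorm (Xh - X) <= vnorm u * (s / 2) by rewrite ler_wpM2l ?vnorm_ge0.
have := vnorm_mulmx u (Xh - X); nra.
Qed.

Lemma pinv_mul_subE X Xh (y yh : 'cV[R]_p) s s' : 0 < s -> 0 < s' ->
  (forall u : 'rV[R]_p, s * vnorm u <= vnorm (u *m X)) ->
  (forall u : 'rV[R]_p, s' * vnorm u <= vnorm (u *m Xh)) ->
  let z := (pinv X)^T *m pinv X *m y in
  pinv Xh *m yh - pinv X *m y =
    pinv Xh *m ((yh - y) - (Xh - X) *m (pinv X *m y)) +
    ((Xh - X)^T *m z - pinv Xh *m (Xh *m ((Xh - X)^T *m z))).
Proof.
(* pinv X y = X^T z, and pinv Xh Xh is the identity on the row space of Xh. *)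
move=> s_gt0 s'_gt0 X_lbound Xh_lbound z.
set th := pinv X *m y; set E := Xh - X; set Ph := pinv Xh.
have thE : th = X^T *m z by rewrite /th /z {1}(pinvE s_gt0 X_lbound) -!mulmxA.
have XE : X = Xh - E by rewrite /E opprB addrC subrK.
have Xth : X *m th = y by rewrite /th mulmxA (mulmx_pinv s_gt0 X_lbound) mul1mx.
have Phy : Ph *m y = Ph *m (Xh *m th) - Ph *m (E *m th).
  by rewrite -Xth -mulmxBr -mulmxBl -XE.
have PhXhth : Ph *m (Xh *m th) = Xh^T *m z - Ph *m (Xh *m (E^T *m z)).
  by rewrite thE XE linearB /= mulmxBl !mulmxBr !mulmxA (pinv_mulmx_tr s'_gt0 Xh_lbound).
have thXh : th = Xh^T *m z - E^T *m z by rewrite thE XE linearB /= mulmxBl.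
rewrite !mulmxBr Phy PhXhth {1}thXh.
move: (Ph *m yh) (Xh^T *m z) (Ph *m (Xh *m (E^T *m z))) (Ph *m (E *m th)) (E^T *m z).
by move=> a b c e f; apply/matrixP => i j; rewrite !mxE; ring.
Qed.

Lemma pinv_mul_lipschitz X (y : 'cV[R]_p) s : 0 < s ->
  (forall u : 'rV[R]_p, s * vnorm u <= vnorm (u *m X)) ->
  exists2 L, 0 <= L & forall Xh (yh : 'cV[R]_p), vnorm (Xh - X) <= s / 2 ->
    vnorm (pinv Xh *m yh - pinv X *m y) <= L * (vnorm (Xh - X) + vnorm (yh - y)).
Proof.
move=> s_gt0 X_lbound.
set th := pinv X *m y; set z := (pinv X)^T *m pinv X *m y.
set B := 1 + 2 / s * (vnorm X + s / 2).
have two_s_ge0 : 0 <= 2 / s by rewrite divr_ge0 // ltW.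
have B_ge0 : 0 <= B by rewrite addr_ge0 // mulr_ge0 // addr_ge0 ?vnorm_ge0 // divr_ge0 // ltW.
exists (2 / s * (1 + vnorm th) + vnorm z * B).
  by apply: addr_ge0; apply: mulr_ge0; rewrite // ?vnorm_ge0 // addr_ge0 ?vnorm_ge0.
move=> Xh yh close; set E := Xh - X; set Ph := pinv Xh.
have s2_gt0 : 0 < s / 2 by rewrite divr_gt0.
have Xh_lbound := lbound_perturb X_lbound close.
have Ph_le (v : 'cV[R]_p) : vnorm (Ph *m v) <= 2 / s * vnorm v.
  by rewrite (le_trans (vnorm_pinv_mul s2_gt0 Xh_lbound v)) // invf_div mulrC.
have le1 : vnorm (Ph *m ((yh - y) - E *m th)) <=
    2 / s * (vnorm (yh - y) + vnorm E * vnorm th).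
  apply: le_trans (Ph_le _) _; rewrite ler_wpM2l //.
  by apply: le_trans (vnormB _ _) _; rewrite lerD2l vnorm_mulmx.
have le2 : vnorm (E^T *m z) <= vnorm E * vnorm z by rewrite -(vnorm_tr E) vnorm_mulmx.
have le3 : vnorm (Ph *m (Xh *m (E^T *m z))) <=
    2 / s * ((vnorm X + s / 2) * (vnorm E * vnorm z)).
  apply: le_trans (Ph_le _) _; rewrite ler_wpM2l //.
  apply: le_trans (vnorm_mulmx _ _) _; apply: ler_pM; rewrite ?vnorm_ge0 //.
  by rewrite /E -[Xh](subrK X) addrC (le_trans (vnormD _ _)) // lerD2l.
rewrite (pinv_mul_subE y yh s_gt0 s2_gt0 X_lbound Xh_lbound) -/th -/z -/E -/Ph.
apply: le_trans (vnormD _ _) _.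
apply: le_trans (lerD le1 (le_trans (vnormB _ _) (lerD le2 le3))) _.
move: (vnorm E) (vnorm_ge0 E) (vnorm (yh - y)) (vnorm_ge0 (yh - y)).
move: (vnorm th) (vnorm_ge0 th) (vnorm z) (vnorm_ge0 z) => t t0 w w0 e e0 f f0.
have := mulr_ge0 two_s_ge0 e0; have := mulr_ge0 two_s_ge0 (mulr_ge0 t0 f0).
have := mulr_ge0 (mulr_ge0 w0 B_ge0) f0; rewrite /B; lra.
Qed.

End Perturbation.

Section ProductWeight.
Variables (R : realType) (T : finType) (w : T -> R).
Hypothesis w_sum1 : \sum_t w t = 1.

Definition pweight N (s : {ffun 'I_N -> T}) : R := \prod_k w (s k).

Lemma sum_pweight N : \sum_(s : {ffun 'I_N -> T}) pweight s = 1.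
Proof. by rewrite /pweight -(bigA_distr_bigA (fun (_ : 'I_N) t => w t)) big1. Qed.

Lemma expect_mul_indep N (i j : 'I_N) (g h : T -> R) : i != j ->
  \sum_(s : {ffun 'I_N -> T}) pweight s * (g (s i) * h (s j)) =
  (\sum_t w t * g t) * (\sum_t w t * h t).
Proof.
move=> ij; pose G k t := w t * ((if k == i then g t else 1) * (if k == j then h t else 1)).
have prod_if (x : 'I_N -> R) l : \prod_k (if k == l then x k else 1) = x l.
  by rewrite -big_mkcond big_pred1_eq.
transitivity (\sum_(s : {ffun 'I_N -> T}) \prod_k G k (s k)).
  apply: eq_bigr => s _; rewrite /G !big_split /=.
  by rewrite (prod_if (fun k => g (s k))) (prod_if (fun k => h (s k))).
rewrite -bigA_distr_bigA /=.
transitivity (\prod_k ((if k == i then \sum_t w t * g t else 1) *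
                       (if k == j then \sum_t w t * h t else 1))).
  apply: eq_bigr => k _; rewrite /G.
  have [->|ki] := eqVneq k i.
    by rewrite (negbTE ij) mulr1; apply: eq_bigr => t _; rewrite mulr1.
  have [_|kj] := eqVneq k j; rewrite ?mul1r.
    by apply: eq_bigr => t _; rewrite mul1r.
  by rewrite -{2}w_sum1; apply: eq_bigr => t _; rewrite mulr1.
by rewrite big_split /= (prod_if (fun=> \sum_t w t * g t)) (prod_if (fun=> \sum_t w t * h t)).
Qed.

Hypothesis w_ge0 : forall t, 0 <= w t.

Lemma pweight_ge0 N (s : {ffun 'I_N -> T}) : 0 <= pweight s.
Proof. exact: prodr_ge0. Qed.

Lemma expect_mean_sqr_le N (Y : T -> R) : (0 < N)%N ->
  \sum_t w t * Y t = 0 -> (forall t, Y t ^+ 2 <= 1) ->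
  \sum_(s : {ffun 'I_N -> T}) pweight s * ((\sum_k Y (s k)) / N%:R) ^+ 2 <= N%:R^-1.
Proof.
(* The cross terms vanish by independence, each diagonal term is at most 1. *)
move=> N_gt0 Y_centered Y_le1; have NR_gt0 : 0 < N%:R :> R by rewrite ltr0n.
have sqrE (s : {ffun 'I_N -> T}) : pweight s * ((\sum_k Y (s k)) / N%:R) ^+ 2
    = N%:R^-2 * \sum_k \sum_l pweight s * (Y (s k) * Y (s l)).
  rewrite expr_div_n expr2 mulr_suml [_ / _]mulrC mulrCA; congr (_ * _).
  by rewrite mulr_sumr; apply: eq_bigr => k _; rewrite !mulr_sumr.
under eq_bigr => s _ do rewrite sqrE.
have cross : \sum_(s : {ffun 'I_N -> T}) \sum_k \sum_l pweight s * (Y (s k) * Y (s l))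
    <= \sum_(k < N) \sum_(l < N) (k == l)%:R.
  rewrite exchange_big; apply: ler_sum => k _; rewrite exchange_big; apply: ler_sum => l _.
  have [<-|kl] := eqVneq k l; last by rewrite expect_mul_indep // Y_centered mul0r.
  rewrite -(sum_pweight N); apply: ler_sum => s _.
  by rewrite -expr2 ler_piMr ?pweight_ge0.
have diag : \sum_(k < N) \sum_(l < N) (k == l)%:R = N%:R :> R.
  rewrite -[N in RHS]card_ord -sum1_card natr_sum; apply: eq_bigr => k _.
  by rewrite (bigD1 k) //= eqxx big1 ?addr0 // => l lk; rewrite eq_sym (negbTE lk).
rewrite -mulr_sumr; apply: le_trans (ler_wpM2l _ cross) _.
  by rewrite invr_ge0 exprn_ge0 // ltW.
by rewrite diag expr2 invfM -mulrA mulVf ?mulr1 // gt_eqF.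
Qed.

Lemma markov_pweight N (S : {ffun 'I_N -> T} -> R) (t : R) : 0 < t ->
  (forall s, 0 <= S s) ->
  1 - (\sum_s pweight s * S s) / t <= \sum_(s | `[< S s <= t >]) pweight s.
Proof.
move=> t_gt0 S_ge0; have := sum_pweight N.
rewrite (bigID (fun s => `[< S s <= t >])) /= => split1.
suff : \sum_(s | ~~ `[< S s <= t >]) pweight s <= (\sum_s pweight s * S s) / t by lra.
rewrite mulr_suml.
apply: (@le_trans _ _ (\sum_(s | ~~ `[< S s <= t >]) pweight s * S s / t)).
  apply: ler_sum => s /asboolPn/negP; rewrite -ltNge => tS.
  by rewrite -mulrA ler_peMr ?pweight_ge0 // ler_pdivlMr // mul1r ltW.
rewrite [leRHS](bigID (fun s => `[< S s <= t >])) /= lerDr.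
by apply: sumr_ge0 => s _; rewrite divr_ge0 ?mulr_ge0 ?pweight_ge0 // ltW.
Qed.

End ProductWeight.

Lemma dist_le1 (R : realType) (I : finType) (p : I -> R) : is_dist p -> forall i, p i <= 1.
Proof.
by case=> p_ge0 p_sum1 i; rewrite -p_sum1 (bigD1 i) //= lerDl sumr_ge0.
Qed.

Lemma dist_centered (R : realType) (I : finType) (p : I -> R) (x : I) : is_dist p ->
  \sum_i p i * ((i == x)%:R - p x) = 0.
Proof.
case=> _ p_sum1; under eq_bigr => i _ do rewrite mulrBr mulrC.
rewrite sumrB -mulr_suml p_sum1 mul1r (bigD1 x) //= eqxx mul1r big1 ?addr0 ?subrr //.
by move=> i /negbTE ->; rewrite mul0r.
Qed.

Lemma dist_card_gt0 (R : realType) (I : finType) (p : I -> R) : is_dist p -> (0 < #|I|)%N.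
Proof.
case=> _ p_sum1; rewrite lt0n; apply/negP => /eqP/card0_eq I0.
by move: p_sum1; rewrite big_pred0 // => /esym/eqP; rewrite oner_eq0.
Qed.

Lemma card_frac_sub (R : realType) N (P : pred 'I_N) (c : R) : (0 < N)%N ->
  #|[set k | P k]|%:R / N%:R - c = (\sum_k ((P k)%:R - c)) / N%:R.
Proof.
move=> N_gt0; rewrite sumrB sumr_const card_ord mulrBl -(mulr_natr c) -mulrA mulfV;
  last by rewrite pnatr_eq0 -lt0n.
by rewrite mulr1 cardsE -sum1_card natr_sum big_mkcond /=; congr (_ / _ - _);
  apply: eq_bigr => k _; rewrite unfold_in; case: (P k).
Qed.

Section Empirical.
Variables (R : realType) (m n : nat) (mu : 'I_m -> R) (nu : 'I_n -> R).
Hypotheses (mu_dist : is_dist mu) (nu_dist : is_dist nu).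

(* [sample_weight mu nu] is, by definition, [pweight pair_weight]. *)
Definition pair_weight (t : 'I_m * 'I_n) : R := mu t.1 * nu t.2.

Lemma pair_weight_ge0 t : 0 <= pair_weight t.
Proof. by case: mu_dist => ? _; case: nu_dist => ? _; rewrite mulr_ge0. Qed.

Lemma expect_pair_fst (g : 'I_m -> R) :
  \sum_t pair_weight t * g t.1 = \sum_a mu a * g a.
Proof.
case: nu_dist => _ nu_sum1; rewrite -(pair_bigA _ (fun a b => mu a * nu b * g a)) /=.
by apply: eq_bigr => a _; rewrite -mulr_suml -mulr_sumr nu_sum1 mulr1.
Qed.

Lemma expect_pair_snd (g : 'I_n -> R) :
  \sum_t pair_weight t * g t.2 = \sum_b nu b * g b.
Proof.
case: mu_dist => _ mu_sum1; rewrite -(pair_bigA _ (fun a b => mu a * nu b * g b)) /=.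
rewrite exchange_big; apply: eq_bigr => b _.
by rewrite -mulr_suml -mulr_suml mu_sum1 mul1r.
Qed.

Lemma pair_weight_sum1 : \sum_t pair_weight t = 1.
Proof.
case: mu_dist nu_dist => _ mu_sum1 [_ nu_sum1].
rewrite -(pair_bigA _ (fun a b => mu a * nu b)) /=.
by under eq_bigr => a _ do rewrite -mulr_sumr nu_sum1 mulr1.
Qed.

Definition sqdev N (s : {ffun 'I_N -> 'I_m * 'I_n}) : R :=
  \sum_a (emp_mu R s a - mu a) ^+ 2 + \sum_b (emp_nu R s b - nu b) ^+ 2.

Lemma sqdev_ge0 N (s : {ffun 'I_N -> 'I_m * 'I_n}) : 0 <= sqdev s.
Proof. by rewrite addr_ge0 // sumr_ge0 // => i _; exact: sqr_ge0. Qed.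

Lemma expect_sqdev_le N : (0 < N)%N ->
  \sum_(s : {ffun 'I_N -> 'I_m * 'I_n}) pweight pair_weight s * sqdev s
    <= (m + n)%:R / N%:R.
Proof.
move=> N_gt0; have sqr_le1 (p : R) (b : bool) : 0 <= p <= 1 -> (b%:R - p) ^+ 2 <= 1.
  by case/andP => p0 p1; case: b => /=; nra.
rewrite /sqdev; under eq_bigr => s _ do rewrite mulrDr !mulr_sumr.
rewrite big_split /= exchange_big [X in _ + X <= _]exchange_big /= natrD mulrDl.
rewrite -[m in leRHS]card_ord -[n in leRHS]card_ord -!sum1_card !natr_sum !mulr_suml.
apply: lerD; apply: ler_sum => x _; rewrite mul1r.
- under eq_bigr => s _ do rewrite /emp_mu card_frac_sub //.
  apply: (expect_mean_sqr_le pair_weight_sum1 pair_weight_ge0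
    (Y := fun t => (t.1 == x)%:R - mu x)) => // [|t].
  + by rewrite (expect_pair_fst (fun a => (a == x)%:R - mu x)) dist_centered.
  + by rewrite sqr_le1 // dist_le1 // andbT; case: mu_dist.
- under eq_bigr => s _ do rewrite /emp_nu card_frac_sub //.
  apply: (expect_mean_sqr_le pair_weight_sum1 pair_weight_ge0
    (Y := fun t => (t.2 == x)%:R - nu x)) => // [|t].
  + by rewrite (expect_pair_snd (fun b => (b == x)%:R - nu x)) dist_centered.
  + by rewrite sqr_le1 // dist_le1 // andbT; case: nu_dist.
Qed.

Lemma sqdev_le_sqrt N (s : {ffun 'I_N -> 'I_m * 'I_n}) (t : R) : sqdev s <= t ->
  (forall a, `|emp_mu R s a - mu a| <= Num.sqrt t) /\
  (forall b, `|emp_nu R s b - nu b| <= Num.sqrt t).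
Proof.
move=> dev_le; have term_le k (F : 'I_k -> R) i : F i ^+ 2 <= \sum_j F j ^+ 2.
  by rewrite (bigD1 i) //= lerDl sumr_ge0 // => j _; exact: sqr_ge0.
split=> [a|b]; apply: sqr_le_sqrt; apply: le_trans _ dev_le; rewrite /sqdev.
  apply: le_trans (term_le _ (fun a => emp_mu R s a - mu a) a) _.
  by rewrite lerDl sumr_ge0 // => b _; exact: sqr_ge0.
apply: le_trans (term_le _ (fun b => emp_nu R s b - nu b) b) _.
by rewrite lerDr sumr_ge0 // => a _; exact: sqr_ge0.
Qed.

Lemma prob_sqdev_le N (delta : R) : 0 < delta -> (0 < N)%N ->
  1 - delta <= prob_samples mu nu
    (fun s : {ffun 'I_N -> 'I_m * 'I_n} => sqdev s <= (m + n)%:R / delta / N%:R).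
Proof.
move=> delta_gt0 N_gt0; have NR_gt0 : 0 < N%:R :> R by rewrite ltr0n.
have mn_gt0 : 0 < (m + n)%:R :> R.
  by rewrite ltr0n addn_gt0 -[m]card_ord (dist_card_gt0 mu_dist).
have t_gt0 : 0 < (m + n)%:R / delta / N%:R by rewrite !divr_gt0.
apply: le_trans _ (markov_pweight pair_weight_sum1 pair_weight_ge0 t_gt0 (@sqdev_ge0 N)).
rewrite lerD2l lerN2 ler_pdivrMr // (_ : delta * _ = (m + n)%:R / N%:R).
  exact: expect_sqdev_le.
by field; rewrite !gt_eqF.
Qed.

Lemma prob_samples_le N (E F : {ffun 'I_N -> 'I_m * 'I_n} -> Prop) :
  (forall s, E s -> F s) -> prob_samples mu nu E <= prob_samples mu nu F.
Proof.
move=> EF; rewrite /prob_samples big_mkcond [leRHS]big_mkcond /=.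
apply: ler_sum => s _; case: asboolP => [/EF Fs|_]; first by rewrite asboolT.
by case: asboolP => // _; exact: (pweight_ge0 pair_weight_ge0).
Qed.

End Empirical.

Section FeatureMatrices.
Variables (R : realType) (m n d : nat) (phi : 'I_m -> 'I_n -> 'rV[R]_d) (K : R).
Hypothesis phi_le : forall a b j, `|phi a b 0 j| <= K.

Lemma Amat_sub_le (nu1 nu2 : 'I_n -> R) (eps : R) : 0 <= eps ->
  (forall b, `|nu1 b - nu2 b| <= eps) ->
  forall i j, `|(Amat phi nu1 - Amat phi nu2) i j| <= 2 * n%:R * K * eps.
Proof.
move=> eps_ge0 nu_close i j.
have -> : (Amat phi nu1 - Amat phi nu2) i j =
    \sum_b (nu1 b - nu2 b) * (phi (succ_of i) b 0 j - phi (first_of i) b 0 j).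
  by rewrite !mxE !summxE -sumrB; apply: eq_bigr => b _; rewrite !mxE; ring.
apply: le_trans (ler_norm_sum _ _ _) _.
rewrite (_ : 2 * n%:R * K * eps = \sum_(b < n) (2 * K * eps)); last first.
  by rewrite sumr_const card_ord -mulr_natl; ring.
apply: ler_sum => b _; rewrite normrM mulrC; apply: ler_pM; rewrite ?normr_ge0 //.
by apply: le_trans (ler_normB _ _) _; rewrite mulr2n mulrDl mul1r lerD.
Qed.

End FeatureMatrices.

Lemma Bmat_Amat (R : realType) m n d (phi : 'I_m -> 'I_n -> 'rV[R]_d) mu :
  Bmat phi mu = Amat (fun b a => phi a b) mu.
Proof. by []. Qed.

Lemma Xmat_lipschitz (R : realType) m n d (phi : 'I_m -> 'I_n -> 'rV[R]_d) :
  exists2 KX, 0 <= KX & forall mu1 mu2 nu1 nu2 (eps : R), 0 <= eps ->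
    (forall a, `|mu1 a - mu2 a| <= eps) -> (forall b, `|nu1 b - nu2 b| <= eps) ->
    vnorm (Xmat phi mu1 nu1 - Xmat phi mu2 nu2) <= KX * eps.
Proof.
have [K K_ge0 K_ub] := exists_norm_ubound (fun x : 'I_m * 'I_n * 'I_d => phi x.1.1 x.1.2 0 x.2).
have phi_le a b j : `|phi a b 0 j| <= K by exact: (K_ub (a, b, j)).
exists (Num.sqrt ((m.-1 + n.-1) * d)%:R * (2 * (m + n)%:R * K)).
  by rewrite mulr_ge0 ?sqrtr_ge0 // !mulr_ge0 ?ler0n.
move=> mu1 mu2 nu1 nu2 eps eps_ge0 mu_close nu_close; rewrite -[_ * _ * eps]mulrA.
have mono k : (k <= m + n)%N -> 2 * k%:R * K * eps <= 2 * (m + n)%:R * K * eps.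
  by move=> kmn; rewrite !ler_wpM2r // ler_wpM2l // ler_nat.
apply: vnorm_le_entry; first by rewrite !mulr_ge0 ?ler0n.
rewrite /Xmat opp_col_mx add_col_mx; apply: col_mx_entry_le => i j.
  exact: le_trans (Amat_sub_le phi_le eps_ge0 nu_close i j) (mono _ (leq_addl _ _)).
rewrite !Bmat_Amat.
by apply: le_trans (Amat_sub_le _ eps_ge0 mu_close i j) (mono _ (leq_addr _ _)).
Qed.

Lemma ln_sub_le (R : realType) (x y c : R) : 0 < c -> c <= x -> c <= y ->
  `|ln x - ln y| <= `|x - y| / c.
Proof.
move=> c_gt0 cx cy.
(* ln u - ln v = ln (u / v) <= u / v - 1 = (u - v) / v. *)
have one_side u v : c <= u -> c <= v -> ln u - ln v <= `|u - v| / c.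
  move=> cu cv; have u_gt0 := lt_le_trans c_gt0 cu; have v_gt0 := lt_le_trans c_gt0 cv.
  rewrite -ln_div ?posrE // -[u / v](subrK 1) addrC.
  apply: le_trans (le_ln1Dx _) _; first by have := divr_gt0 u_gt0 v_gt0; lra.
  rewrite -[1](@mulfV _ v) ?gt_eqF // -mulrBl.
  apply: (@le_trans _ _ (`|u - v| / v)).
    by apply: ler_wpM2r; [rewrite invr_ge0 ltW | exact: ler_norm].
  by rewrite ler_wpM2l ?normr_ge0 // lef_pV2 ?posrE.
by rewrite ler_norml one_side // andbT lerNl opprB distrC one_side.
Qed.

Lemma dvecE (R : realType) n (eta : R) (nu : 'I_n -> R) : dvec eta nu = - cvec eta nu.
Proof. by apply/matrixP => i j; rewrite !mxE mulNr. Qed.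

Lemma cvec_sub_le (R : realType) k (eta c eps : R) (f g : 'I_k -> R) :
  0 < eta -> 0 < c -> (forall a, `|f a - g a| <= eps) ->
  (forall a, c <= f a) -> (forall a, c <= g a) ->
  forall i j, `|(cvec eta f - cvec eta g) i j| <= 2 / (eta * c) * eps.
Proof.
move=> eta_gt0 c_gt0 fg_close cf cg i j.
have f_gt0 a : 0 < f a := lt_le_trans c_gt0 (cf a).
have g_gt0 a : 0 < g a := lt_le_trans c_gt0 (cg a).
rewrite !mxE -mulrBr normrM gtr0_norm ?invr_gt0 // !ln_div ?posrE //.
rewrite (_ : 2 / (eta * c) * eps = eta^-1 * (eps / c + eps / c)); last first.
  by rewrite invfM; field; rewrite !gt_eqF.
rewrite ler_pM2l ?invr_gt0 //.
set a1 := succ_of i; set a0 := first_of i.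
have ln_close a : `|ln (f a) - ln (g a)| <= eps / c.
  by apply: le_trans (ln_sub_le c_gt0 (cf a) (cg a)) _; rewrite ler_pM2r ?invr_gt0.
apply: le_trans (lerD (ln_close a1) (ln_close a0)).
rewrite (_ : _ - _ = (ln (f a1) - ln (g a1)) - (ln (f a0) - ln (g a0))); last by ring.
exact: ler_normB.
Qed.

Lemma yvec_sub_le (R : realType) m n (eta c eps : R) (mu1 mu2 : 'I_m -> R)
    (nu1 nu2 : 'I_n -> R) :
  0 < eta -> 0 < c -> 0 <= eps ->
  (forall a, `|mu1 a - mu2 a| <= eps) -> (forall b, `|nu1 b - nu2 b| <= eps) ->
  (forall a, c <= mu1 a) -> (forall a, c <= mu2 a) ->
  (forall b, c <= nu1 b) -> (forall b, c <= nu2 b) ->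
  vnorm (yvec eta mu1 nu1 - yvec eta mu2 nu2) <=
    Num.sqrt ((m.-1 + n.-1) * 1)%:R * (2 / (eta * c) * eps).
Proof.
move=> eta_gt0 c_gt0 eps_ge0 mu_close nu_close cmu1 cmu2 cnu1 cnu2.
apply: vnorm_le_entry; first by rewrite mulr_ge0 // divr_ge0 ?mulr_ge0 // ltW.
rewrite /yvec !dvecE opp_col_mx add_col_mx opprK [- _ + _]addrC; apply: col_mx_entry_le.
  exact: cvec_sub_le.
by apply: cvec_sub_le => // b; rewrite distrC.
Qed.

Lemma theta_min_locally_lipschitz (R : realType) m n d (eta : R)
    (phi : 'I_m -> 'I_n -> 'rV[R]_d) (mu : 'I_m -> R) (nu : 'I_n -> R) (sb : R) :
  0 < eta -> (forall a, 0 < mu a) -> (forall b, 0 < nu b) ->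
  0 < sb -> sb <= sigma_min (Xmat phi mu nu) ->
  exists L e0, [/\ 0 <= L, 0 < e0 & forall mu' nu' eps, 0 <= eps <= e0 ->
    (forall a, `|mu' a - mu a| <= eps) -> (forall b, `|nu' b - nu b| <= eps) ->
    vnorm (theta_min eta phi mu' nu' - theta_min eta phi mu nu) <= L * eps].
Proof.
move=> eta_gt0 mu_gt0 nu_gt0 sb_gt0 sb_le.
have [cm cm_gt0 cm_le] := exists_pos_lbound mu_gt0.
have [cn cn_gt0 cn_le] := exists_pos_lbound nu_gt0.
pose c := Num.min cm cn; have c2_gt0 : 0 < c / 2 by rewrite divr_gt0 // lt_min cm_gt0.
have c_mu a : c <= mu a by rewrite (le_trans _ (cm_le a)) // ge_min lexx.
have c_nu b : c <= nu b by rewrite (le_trans _ (cn_le b)) // ge_min lexx orbT.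
have half_le x : c <= x -> c / 2 <= x by move=> cx; have := c2_gt0; lra.
have [KX KX_ge0 X_lip] := Xmat_lipschitz phi.
set Ky := Num.sqrt ((m.-1 + n.-1) * 1)%:R * (2 / (eta * (c / 2))).
have Ky_ge0 : 0 <= Ky by rewrite mulr_ge0 ?sqrtr_ge0 // divr_ge0 // ltW // mulr_gt0.
have [Lp Lp_ge0 pinv_lip] :=
  pinv_mul_lipschitz (yvec eta mu nu) sb_gt0 (sigma_min_lbound sb_le).
have KX1_gt0 : 0 < KX + 1 by rewrite ltr_wpDl.
exists (Lp * (KX + Ky)), (Num.min (c / 2) (sb / (2 * (KX + 1)))); split.
- by rewrite mulr_ge0 ?addr_ge0.
- by rewrite lt_min c2_gt0 !divr_gt0 // mulr_gt0.
move=> mu' nu' eps /andP[eps_ge0]; rewrite le_min => /andP[eps_c eps_sb] mu_close nu_close.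
have X_le := X_lip _ _ _ _ _ eps_ge0 mu_close nu_close.
have X_close : vnorm (Xmat phi mu' nu' - Xmat phi mu nu) <= sb / 2.
  apply: le_trans X_le (le_trans (ler_wpM2l KX_ge0 eps_sb) _).
  rewrite (_ : KX * _ = sb / 2 * (KX / (KX + 1))); last by field; rewrite gt_eqF.
  apply: ler_piMr; first by rewrite ltW // divr_gt0.
  by rewrite ler_pdivrMr // mul1r lerDl.
have y_le : vnorm (yvec eta mu' nu' - yvec eta mu nu) <= Ky * eps.
  rewrite /Ky -mulrA; apply: yvec_sub_le => // [a|a|b|b].
  - exact: lbound_close c_mu eps_c mu_close a.
  - exact/half_le.
  - exact: lbound_close c_nu eps_c nu_close b.
  - exact/half_le.
apply: le_trans (pinv_lip _ _ X_close) _.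
by rewrite -mulrA ler_wpM2l // mulrDl lerD.
Qed.

Theorem mainTheorem6 (R : realType) (m n d : nat)
  (hm : (2 <= m)%N) (hn : (2 <= n)%N) (eta : R) (heta : 0 < eta)
  (phi : 'I_m -> 'I_n -> 'rV[R]_d) (theta_star : 'cV[R]_d) (M : R)
  (hM : vnorm theta_star ^+ 2 <= M)
  (mu_star : 'I_m -> R) (nu_star : 'I_n -> R)
  (hQRE : is_QRE eta (Qlin phi theta_star) mu_star nu_star)
  (hmu_pos : forall a, 0 < mu_star a) (hnu_pos : forall b, 0 < nu_star b)
  (sigma_b : R) (hsb : 0 < sigma_b)
  (hrank : row_free (Xmat phi mu_star nu_star))
  (hsig : sigma_b <= sigma_min (Xmat phi mu_star nu_star)) :
  forall delta : R, 0 < delta < 1 ->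
  exists N0 : nat, exists C : R, forall N : nat, (N0 <= N)%N ->
    1 - delta <=
      prob_samples mu_star nu_star
        (fun s : {ffun 'I_N -> 'I_m * 'I_n} =>
           vnorm (theta_hat eta phi s - theta_min eta phi mu_star nu_star)
             <= C * ((m ^ 2 + n ^ 2)%:R / Num.sqrt N%:R)).
Proof.
move=> delta /andP[delta_gt0 _]; case: hQRE => mu_dist nu_dist _ _.
have [L [e0 [L_ge0 e0_gt0 theta_lip]]] :=
  theta_min_locally_lipschitz heta hmu_pos hnu_pos hsb hsig.
set a := (m + n)%:R / delta.
have [N0 large] := eventually_div_natr_le a (exprn_gt0 2 e0_gt0).
exists N0, (L * Num.sqrt a) => N /large [N_gt0 small].
apply: le_trans (prob_sqdev_le mu_dist nu_dist delta_gt0 N_gt0)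
  (prob_samples_le mu_dist nu_dist _) => s.
case/sqdev_le_sqrt => mu_close nu_close.
have sqrt_le : 0 <= Num.sqrt (a / N%:R) <= e0.
  by rewrite sqrtr_ge0 -(ger0_norm (ltW e0_gt0)) -sqrtr_sqr ler_sqrt ?sqr_ge0.
apply: le_trans (theta_lip _ _ _ sqrt_le mu_close nu_close) _.
rewrite sqrtrM ?sqrtrV ?divr_ge0 ?ler0n ?(ltW delta_gt0) // mulrA.
rewrite ler_wpM2l ?mulr_ge0 ?sqrtr_ge0 //.
by rewrite ler_peMl ?invr_ge0 ?sqrtr_ge0 // ler1n addn_gt0 expn_gt0 ltnW.
Qed.
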